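(* Under Assumption M (together with the decomposition of Assumption D), with $S_{l,r}(\beta_0)$ the Rademacher representation of the score, $E[S_{l,r}(\beta_0)\mid\mathcal J]=0$ for each $l$, and the conditional variance satisfies $$\Omega_{l_1l_2}(\beta_0):=E\big[n\,S_{l_1,r}(\beta_0)S_{l_2,r}(\beta_0)\mid\mathcal J\big]=\Omega^L_{l_1l_2}(\beta_0)+\Omega^H_{l_1l_2}(\beta_0),$$ where $\Omega^L=\Omega^{L,z}+\Omega^{L,a}+\Omega^{L,u}$ with $\Omega^{L,z}_{l_1l_2}=\frac1n\bar z_{(l_1)}'\big[(I-D_P)V(I-D_P)+D_PD_V(I-2D_P)+V\odot P\odot P\big]\bar z_{(l_2)}$, $\Omega^{L,a}_{l_1l_2}=\frac1n a_{(l_1)}'(D_P-P\odot P)a_{(l_2)}$, $\Omega^{L,u}_{l_1l_2}=\frac1n\operatorname{tr}\big(D_{\Sigma^U(l_1,l_2)}D_V(I-D_P)\big)$, and $\Omega^H=\Omega^{H,z}+\Omega^{H,a}+\Omega^{H,u}$ with $\Omega^{H,z}_{l_1l_2}=\frac1n\bar z_{(l_1)}'(V\odot W)\bar z_{(l_2)}$, $\Omega^{H,a}_{l_1l_2}=-\frac2n a_{(l_1)}'(D_P-P\odot P)^2a_{(l_2)}$, $\Omega^{H,u}_{l_1l_2}=-\frac2n\operatorname{tr}\big(D_{\Sigma^U(l_1,l_2)}\big[D_VD_P(I-2D_P)+\big((VD_\varepsilon\odot VD_\varepsilon)(P\odot P)\big)\odot I\big]\big)$, where $V\odot W$ is the $n\times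 n$ matrix with entries, for $i_1\ne i_2$, $[V\odot W]_{i_1i_2}=V_{i_1i_2}\big[(P_{i_1i_1}P_{i_2i_2}+P_{i_1i_2}^2)(3-4P_{i_1i_1}-4P_{i_2i_2})-2P_{i_1i_1}-2P_{i_2i_2}+2(P_{i_1i_1}+P_{i_2i_2})^2\big]$ and diagonal entries $[V\odot W]_{ii}=-2V_{ii}P_{ii}(1-2P_{ii})-2\sum_{j=1}^nV_{ij}^2\varepsilon_j^2P_{ij}^2$.
   Context: Notation: for a vector $v$, $D_v$ is the diagonal matrix with $v$ on its diagonal; for a square matrix $A$, $D_A=A\odot I$ ($\odot$ the Hadamard product); $\iota$ the vector of ones; $D_\varepsilon^2=D_\varepsilon D_\varepsilon$. Linear IV model: $y_i=x_i'\beta_0+\varepsilon_i$, $x_i=\Pi'z_i+\eta_i$, $i=1,\dots,n$, $x_i\in\mathbb R^p$, $z_i\in\mathbb R^k$; $Z$ has rows $z_i'$, $x_{(l)}$ is the $l$th column of the matrix $X$ with rows $x_i'$, $\bar Z=Z\Pi$ with columns $\bar z_{(l)}$, $V=Z(Z'D_\varepsilon^2Z)^{-1}Z'$, $P=D_\varepsilon VD_\varepsilon$, $M=I-P$. The score at $\beta_0$ is $S_l(\beta_0)=-\frac1nx_{(l)}'(I-D_{P\iota})V\varepsilon$. Assumption M: (a) conditional on $Z$, $\{(\varepsilon_i,\eta_i')\}$ are independent, mean zero, with conditional covariance $\Sigma_i=\begin{pmatrix}\sigma_i^2&\sigma_{12i}'\\\sigma_{12i}&\Sigma_{22i}\end{pmatrix}$;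 (b) eigenvalues of $\Sigma_i$ in $[C^{-1},C]$ a.s.; (c) $E[\varepsilon_i^4\mid Z]\le C$, $E[\|\eta_i\|^4\mid Z]\le C$ a.s.; (d) conditional on $Z$, $\varepsilon\overset d=D_r\varepsilon$ with $r=(r_1,\dots,r_n)'$ independent Rademacher variables independent of everything else. Assumption D: $\eta_i=\varepsilon_ia_i+u_i$, $a_i=\sigma_{12i}/\sigma_i^2$, with $\{u_i\}$ and $\{\varepsilon_i\}$ mutually independent given $Z$. Write $a_{(l)}=(a_{1l},\dots,a_{nl})'$, $\bar x_{(l)}=\bar z_{(l)}+u_{(l)}$ (so $x_{(l)}=\bar x_{(l)}+D_\varepsilon a_{(l)}$), and $D_{\Sigma^U(l_1,l_2)}$ the diagonal matrix with $i$th entry $\operatorname{Cov}(u_{il_1},u_{il_2}\mid Z)$. Rademacher representation: $S_{l,r}(\beta_0)=-\frac1n\bar x_{(l)}'VD_\varepsilon r-\frac1n r'D_{a_{(l)}}Pr+\frac1n r'PD_{a_{(l)}}Pr+\frac1n r'PD_rD_{\bar x_{(l)}}VD_\varepsilon r$, which conditionally on $Z$ has the same distribution as $S_l(\beta_0)$. $\mathcal J=\{\varepsilon_i,z_i\}_{i=1}^n$; conditional expectations given $\mathcal J$ are over $r$ and $\{u_i\}$. *)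

From HB Require Import structures.
From mathcomp Require Import all_boot all_order all_algebra.
From mathcomp Require Import all_classical all_reals all_analysis.
Set Implicit Arguments. Unset Strict Implicit. Unset Printing Implicit Defensive.
Import Order.TTheory GRing.Theory Num.Theory.
Local Open Scope ring_scope.

Section IVScore.
Context {R : realType} {n k p : nat}.

Definition Dvec (v : 'I_n -> R) : 'M[R]_n := diag_mx (\row_i v i).
Definition Dmat (A : 'M[R]_n) : 'M[R]_n := diag_mx (\row_i A i i).
Definition hadm (A B : 'M[R]_n) : 'M[R]_n := \matrix_(i, j) (A i j * B i j).

Definition Vmat (Z : 'M[R]_(n, k)) (eps : 'I_n -> R) : 'M[R]_n :=
  Z *m invmx (Z^T *m (Dvec eps *m Dvec eps) *m Z) *m Z^T.
Definition Pmat (Z : 'M[R]_(n, k)) (eps : 'I_n -> R) : 'M[R]_n :=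
  Dvec eps *m Vmat Z eps *m Dvec eps.

Definition rsign (b : {ffun 'I_n -> bool}) : 'cV[R]_n :=
  \col_i (if b i then 1 else -1).
(* Expectation over r : uniform average over the 2^n sign vectors
   (independent Rademacher coordinates) *)
Definition Er (f : {ffun 'I_n -> bool} -> R) : R :=
  (#|{: {ffun 'I_n -> bool}}|%:R)^-1 * \sum_(b : {ffun 'I_n -> bool}) f b.

(* Rademacher representation S_{l,r}(beta_0), for a realization U of the
   n x p matrix with rows u_i' ; xbar_(l) = zbar_(l) + u_(l), zbar = Z Pi. *)
Definition scoreR (Z : 'M[R]_(n, k)) (eps : 'I_n -> R) (Pi : 'M[R]_(k, p))
  (a : 'M[R]_(n, p)) (U : 'M[R]_(n, p)) (l : 'I_p) (b : {ffun 'I_n -> bool})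
  : R :=
  let V := Vmat Z eps in
  let P := Pmat Z eps in
  let De := Dvec eps in
  let r := rsign b in
  let xb := col l (Z *m Pi) + col l U in
  let Da := Dvec (fun i => a i l) in
  let Dr := Dvec (fun i => r i 0) in
  let Dx := Dvec (fun i => xb i 0) in
  let c := (n%:R)^-1 in
  (- (c *: (xb^T *m V *m De *m r))
   - c *: (r^T *m Da *m P *m r)
   + c *: (r^T *m P *m Da *m P *m r)
   + c *: (r^T *m P *m Dr *m Dx *m V *m De *m r)) 0 0.

Definition VWmat (Z : 'M[R]_(n, k)) (eps : 'I_n -> R) : 'M[R]_n :=
  let V := Vmat Z eps in
  let P := Pmat Z eps in
  \matrix_(i1, i2)
    if i1 == i2 then
      - 2 * V i1 i1 * P i1 i1 * (1 - 2 * P i1 i1)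
      - 2 * \sum_j (V i1 j ^+ 2 * eps j ^+ 2 * P i1 j ^+ 2)
    else
      V i1 i2 * ((P i1 i1 * P i2 i2 + P i1 i2 ^+ 2)
                   * (3 - 4 * P i1 i1 - 4 * P i2 i2)
                 - 2 * P i1 i1 - 2 * P i2 i2
                 + 2 * (P i1 i1 + P i2 i2) ^+ 2).

Definition DSigU (SigU : 'I_n -> 'M[R]_p) (l1 l2 : 'I_p) : 'M[R]_n :=
  Dvec (fun i => SigU i l1 l2).

Definition OmegaLz Z eps (Pi : 'M[R]_(k, p)) (l1 l2 : 'I_p) : R :=
  let V := Vmat Z eps in let P := Pmat Z eps in
  let DP := Dmat P in let DV := Dmat V in
  let zb := Z *m Pi in
  (n%:R)^-1 * ((col l1 zb)^T *m
     ((1%:M - DP) *m V *m (1%:M - DP) + DP *m DV *m (1%:M - 2%:R *: DP)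
      + hadm (hadm V P) P) *m col l2 zb) 0 0.

Definition OmegaLa Z eps (a : 'M[R]_(n, p)) (l1 l2 : 'I_p) : R :=
  let P := Pmat Z eps in
  (n%:R)^-1 * ((col l1 a)^T *m (Dmat P - hadm P P) *m col l2 a) 0 0.

Definition OmegaLu Z eps (SigU : 'I_n -> 'M[R]_p) (l1 l2 : 'I_p) : R :=
  let V := Vmat Z eps in let P := Pmat Z eps in
  (n%:R)^-1 * \tr (DSigU SigU l1 l2 *m Dmat V *m (1%:M - Dmat P)).

Definition OmegaHz Z eps (Pi : 'M[R]_(k, p)) (l1 l2 : 'I_p) : R :=
  let zb := Z *m Pi in
  (n%:R)^-1 * ((col l1 zb)^T *m VWmat Z eps *m col l2 zb) 0 0.

Definition OmegaHa Z eps (a : 'M[R]_(n, p)) (l1 l2 : 'I_p) : R :=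
  let P := Pmat Z eps in
  let Q := Dmat P - hadm P P in
  - (2 / n%:R) * ((col l1 a)^T *m (Q *m Q) *m col l2 a) 0 0.

Definition OmegaHu Z eps (SigU : 'I_n -> 'M[R]_p) (l1 l2 : 'I_p) : R :=
  let V := Vmat Z eps in let P := Pmat Z eps in
  let DP := Dmat P in let DV := Dmat V in
  let VD := V *m Dvec eps in
  - (2 / n%:R) * \tr (DSigU SigU l1 l2 *m
      (DV *m DP *m (1%:M - 2%:R *: DP)
       + hadm (hadm VD VD *m hadm P P) 1%:M)).

Definition OmegaL Z eps Pi a SigU (l1 l2 : 'I_p) : R :=
  OmegaLz Z eps Pi l1 l2 + OmegaLa Z eps a l1 l2 + OmegaLu Z eps SigU l1 l2.
Definition OmegaH Z eps Pi a SigU (l1 l2 : 'I_p) : R :=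
  OmegaHz Z eps Pi l1 l2 + OmegaHa Z eps a l1 l2 + OmegaHu Z eps SigU l1 l2.

End IVScore.

From HB Require Import structures.
From mathcomp Require Import all_boot all_order all_algebra.
From mathcomp Require Import all_classical all_reals all_analysis.
From mathcomp Require Import ring lra measurable_realfun.
Import Order.TTheory GRing.Theory Num.Theory.
Set Implicit Arguments. Unset Strict Implicit. Unset Printing Implicit Defensive.
Local Open Scope ring_scope.

(* For fixed (eps, Z) and a realization u of the noise, the score S_{l,r} is
   a polynomial of degree three in the Rademacher vector r.  It equals
   c (sum_i x_i zterm_i(r) - sum_i a_i aterm_i(r)) with c = 1/n and
   x = zbar_(l) + u_(l), where zterm_i and aterm_i are products of the
   linear forms (P r)_i, (V D_eps r)_i and r_i.  Expectations over r thus
   reduce to the moments E[(a_1'r) ... (a_m'r)] of Rademacher linear forms,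
   computed for m <= 6 by induction on n (odd moments vanish by symmetry).
   The identities V D_eps^2 V = V and P = D_eps V D_eps turn the resulting
   inner products into entries of V and P, so E_r[S] = 0 and n E_r[S S'] is
   a quadratic form in (x, a) with explicit kernels Kz and Ka; these are
   matched entrywise with the matrices defining Omega^L + Omega^H.  Finally
   integrating over the centred noise u replaces x_i x_j by
   zbar_i zbar_j + delta_ij Sigma^U_ii. *)

Section RademacherMoments.
Variable R : comPzRingType.

Definition sgn (x : bool) : R := if x then 1 else -1.
Definition rlin n (a : 'I_n -> R) (b : {ffun 'I_n -> bool}) : R :=
  \sum_i a i * sgn (b i).

Definition vdot n (a1 a2 : 'I_n -> R) : R := \sum_i a1 i * a2 i.
Definition vsum4 n (a1 a2 a3 a4 : 'I_n -> R) : R :=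
  \sum_i a1 i * a2 i * a3 i * a4 i.
Definition vsum6 n (a1 a2 a3 a4 a5 a6 : 'I_n -> R) : R :=
  \sum_i a1 i * a2 i * a3 i * a4 i * a5 i * a6 i.

(* Sign patterns on n.+1 coordinates are pairs (first sign, remaining
   pattern); this is the induction step of every moment computation. *)
Definition cube_cons n (x : bool) (b : {ffun 'I_n -> bool}) :
  {ffun 'I_n.+1 -> bool} :=
  [ffun i => if unlift ord0 i is Some j then b j else x].

Lemma sum_cube_cons n (F : {ffun 'I_n.+1 -> bool} -> R) :
  \sum_b F b = \sum_b (F (cube_cons true b) + F (cube_cons false b)).
Proof.
rewrite big_split.
rewrite (reindex (fun xb : bool * {ffun 'I_n -> bool} => cube_cons xb.1 xb.2)).
  by rewrite -(pair_big xpredT xpredT (fun x b => F (cube_cons x b))) big_bool.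
exists (fun b : {ffun 'I_n.+1 -> bool} => (b ord0, [ffun j => b (lift ord0 j)])).
  move=> [x b] _; rewrite /cube_cons ffunE unlift_none; congr pair.
  by apply/ffunP => j; rewrite !ffunE liftK.
move=> b _; apply/ffunP => i; rewrite /cube_cons ffunE /=.
by case: unliftP => [j ->|->]; rewrite ?ffunE.
Qed.

Lemma rlin_cons n (a : 'I_n.+1 -> R) x b :
  rlin a (cube_cons x b) = a ord0 * sgn x + rlin (fun j => a (lift ord0 j)) b.
Proof.
rewrite /rlin big_ord_recl /cube_cons ffunE unlift_none; congr (_ + _).
by apply: eq_bigr => j _; rewrite ffunE liftK.
Qed.

Lemma sum_cube1 n : \sum_(b : {ffun 'I_n -> bool}) (1 : R) = (2 ^ n)%:R.
Proof. by rewrite sumr_const card_ffun card_bool card_ord. Qed.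

Lemma sum_expand2 (T : finType) (c1 c2 : R) (X1 X2 : T -> R) :
  \sum_(b : T) (c1 + X1 b) * (c2 + X2 b) =
  c1 * c2 * (\sum_(b : T) 1) + c1 * (\sum_(b : T) X2 b) +
  c2 * (\sum_(b : T) X1 b) + (\sum_(b : T) X1 b * X2 b).
Proof. by rewrite !mulr_sumr -!big_split; apply: eq_bigr => b _ /=; ring. Qed.

Lemma sum_expand4 (T : finType) (c1 c2 c3 c4 : R) (X1 X2 X3 X4 : T -> R) :
  \sum_(b : T) (c1 + X1 b) * (c2 + X2 b) * (c3 + X3 b) * (c4 + X4 b) =
  c1 * c2 * c3 * c4 * (\sum_(b : T) 1) + c1 * c2 * c3 * (\sum_(b : T) X4 b) +
  c1 * c2 * c4 * (\sum_(b : T) X3 b) + c1 * c2 * (\sum_(b : T) X3 b * X4 b) +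
  c1 * c3 * c4 * (\sum_(b : T) X2 b) + c1 * c3 * (\sum_(b : T) X2 b * X4 b) +
  c1 * c4 * (\sum_(b : T) X2 b * X3 b) + c1 * (\sum_(b : T) X2 b * X3 b * X4 b) +
  c2 * c3 * c4 * (\sum_(b : T) X1 b) + c2 * c3 * (\sum_(b : T) X1 b * X4 b) +
  c2 * c4 * (\sum_(b : T) X1 b * X3 b) + c2 * (\sum_(b : T) X1 b * X3 b * X4 b) +
  c3 * c4 * (\sum_(b : T) X1 b * X2 b) + c3 * (\sum_(b : T) X1 b * X2 b * X4 b) +
  c4 * (\sum_(b : T) X1 b * X2 b * X3 b) + (\sum_(b : T) X1 b * X2 b * X3 b * X4 b).
Proof. by rewrite !mulr_sumr -!big_split; apply: eq_bigr => b _ /=; ring. Qed.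

Lemma sum_expand6 (T : finType) (c1 c2 c3 c4 c5 c6 : R)
    (X1 X2 X3 X4 X5 X6 : T -> R) :
  \sum_(b : T) (c1 + X1 b) * (c2 + X2 b) * (c3 + X3 b) * (c4 + X4 b)
                * (c5 + X5 b) * (c6 + X6 b) =
  c1 * c2 * c3 * c4 * c5 * c6 * (\sum_(b : T) 1) +
  c1 * c2 * c3 * c4 * c5 * (\sum_(b : T) X6 b) +
  c1 * c2 * c3 * c4 * c6 * (\sum_(b : T) X5 b) +
  c1 * c2 * c3 * c4 * (\sum_(b : T) X5 b * X6 b) +
  c1 * c2 * c3 * c5 * c6 * (\sum_(b : T) X4 b) +
  c1 * c2 * c3 * c5 * (\sum_(b : T) X4 b * X6 b) +
  c1 * c2 * c3 * c6 * (\sum_(b : T) X4 b * X5 b) +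
  c1 * c2 * c3 * (\sum_(b : T) X4 b * X5 b * X6 b) +
  c1 * c2 * c4 * c5 * c6 * (\sum_(b : T) X3 b) +
  c1 * c2 * c4 * c5 * (\sum_(b : T) X3 b * X6 b) +
  c1 * c2 * c4 * c6 * (\sum_(b : T) X3 b * X5 b) +
  c1 * c2 * c4 * (\sum_(b : T) X3 b * X5 b * X6 b) +
  c1 * c2 * c5 * c6 * (\sum_(b : T) X3 b * X4 b) +
  c1 * c2 * c5 * (\sum_(b : T) X3 b * X4 b * X6 b) +
  c1 * c2 * c6 * (\sum_(b : T) X3 b * X4 b * X5 b) +
  c1 * c2 * (\sum_(b : T) X3 b * X4 b * X5 b * X6 b) +
  c1 * c3 * c4 * c5 * c6 * (\sum_(b : T) X2 b) +
  c1 * c3 * c4 * c5 * (\sum_(b : T) X2 b * X6 b) +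
  c1 * c3 * c4 * c6 * (\sum_(b : T) X2 b * X5 b) +
  c1 * c3 * c4 * (\sum_(b : T) X2 b * X5 b * X6 b) +
  c1 * c3 * c5 * c6 * (\sum_(b : T) X2 b * X4 b) +
  c1 * c3 * c5 * (\sum_(b : T) X2 b * X4 b * X6 b) +
  c1 * c3 * c6 * (\sum_(b : T) X2 b * X4 b * X5 b) +
  c1 * c3 * (\sum_(b : T) X2 b * X4 b * X5 b * X6 b) +
  c1 * c4 * c5 * c6 * (\sum_(b : T) X2 b * X3 b) +
  c1 * c4 * c5 * (\sum_(b : T) X2 b * X3 b * X6 b) +
  c1 * c4 * c6 * (\sum_(b : T) X2 b * X3 b * X5 b) +
  c1 * c4 * (\sum_(b : T) X2 b * X3 b * X5 b * X6 b) +
  c1 * c5 * c6 * (\sum_(b : T) X2 b * X3 b * X4 b) +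
  c1 * c5 * (\sum_(b : T) X2 b * X3 b * X4 b * X6 b) +
  c1 * c6 * (\sum_(b : T) X2 b * X3 b * X4 b * X5 b) +
  c1 * (\sum_(b : T) X2 b * X3 b * X4 b * X5 b * X6 b) +
  c2 * c3 * c4 * c5 * c6 * (\sum_(b : T) X1 b) +
  c2 * c3 * c4 * c5 * (\sum_(b : T) X1 b * X6 b) +
  c2 * c3 * c4 * c6 * (\sum_(b : T) X1 b * X5 b) +
  c2 * c3 * c4 * (\sum_(b : T) X1 b * X5 b * X6 b) +
  c2 * c3 * c5 * c6 * (\sum_(b : T) X1 b * X4 b) +
  c2 * c3 * c5 * (\sum_(b : T) X1 b * X4 b * X6 b) +
  c2 * c3 * c6 * (\sum_(b : T) X1 b * X4 b * X5 b) +
  c2 * c3 * (\sum_(b : T) X1 b * X4 b * X5 b * X6 b) +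
  c2 * c4 * c5 * c6 * (\sum_(b : T) X1 b * X3 b) +
  c2 * c4 * c5 * (\sum_(b : T) X1 b * X3 b * X6 b) +
  c2 * c4 * c6 * (\sum_(b : T) X1 b * X3 b * X5 b) +
  c2 * c4 * (\sum_(b : T) X1 b * X3 b * X5 b * X6 b) +
  c2 * c5 * c6 * (\sum_(b : T) X1 b * X3 b * X4 b) +
  c2 * c5 * (\sum_(b : T) X1 b * X3 b * X4 b * X6 b) +
  c2 * c6 * (\sum_(b : T) X1 b * X3 b * X4 b * X5 b) +
  c2 * (\sum_(b : T) X1 b * X3 b * X4 b * X5 b * X6 b) +
  c3 * c4 * c5 * c6 * (\sum_(b : T) X1 b * X2 b) +
  c3 * c4 * c5 * (\sum_(b : T) X1 b * X2 b * X6 b) +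
  c3 * c4 * c6 * (\sum_(b : T) X1 b * X2 b * X5 b) +
  c3 * c4 * (\sum_(b : T) X1 b * X2 b * X5 b * X6 b) +
  c3 * c5 * c6 * (\sum_(b : T) X1 b * X2 b * X4 b) +
  c3 * c5 * (\sum_(b : T) X1 b * X2 b * X4 b * X6 b) +
  c3 * c6 * (\sum_(b : T) X1 b * X2 b * X4 b * X5 b) +
  c3 * (\sum_(b : T) X1 b * X2 b * X4 b * X5 b * X6 b) +
  c4 * c5 * c6 * (\sum_(b : T) X1 b * X2 b * X3 b) +
  c4 * c5 * (\sum_(b : T) X1 b * X2 b * X3 b * X6 b) +
  c4 * c6 * (\sum_(b : T) X1 b * X2 b * X3 b * X5 b) +
  c4 * (\sum_(b : T) X1 b * X2 b * X3 b * X5 b * X6 b) +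
  c5 * c6 * (\sum_(b : T) X1 b * X2 b * X3 b * X4 b) +
  c5 * (\sum_(b : T) X1 b * X2 b * X3 b * X4 b * X6 b) +
  c6 * (\sum_(b : T) X1 b * X2 b * X3 b * X4 b * X5 b) +
  (\sum_(b : T) X1 b * X2 b * X3 b * X4 b * X5 b * X6 b).
Proof. by rewrite !mulr_sumr -!big_split; apply: eq_bigr => b _ /=; ring. Qed.

(* The even Rademacher moments E[(a1'r)(a2'r)...] of orders 2, 4 and 6 (the
   sums below are 2^n times the expectations). *)
Lemma rad_mom2 n (a1 a2 : 'I_n -> R) :
  \sum_b rlin a1 b * rlin a2 b = (2 ^ n)%:R * vdot a1 a2.
Proof.
elim: n a1 a2 => [|n IH] a1 a2.
  rewrite big1 => [|b _]; last by rewrite /rlin big_ord0 !mul0r.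
  by rewrite /vdot big_ord0 expn0; ring.
rewrite sum_cube_cons.
under eq_bigr => b _ do rewrite !rlin_cons.
rewrite big_split /= !sum_expand2 !IH !sum_cube1 /vdot !big_ord_recl expnS natrM /sgn.
ring.
Qed.

Lemma rad_mom4 n (a1 a2 a3 a4 : 'I_n -> R) :
  \sum_b rlin a1 b * rlin a2 b * rlin a3 b * rlin a4 b =
  (2 ^ n)%:R * (vdot a1 a2 * vdot a3 a4 + vdot a1 a3 * vdot a2 a4
                + vdot a1 a4 * vdot a2 a3 - 2%:R * vsum4 a1 a2 a3 a4).
Proof.
elim: n a1 a2 a3 a4 => [|n IH] a1 a2 a3 a4.
  rewrite big1 => [|b _]; last by rewrite /rlin big_ord0 !mul0r.
  by rewrite /vdot /vsum4 !big_ord0 expn0; ring.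
rewrite sum_cube_cons.
under eq_bigr => b _ do rewrite !rlin_cons.
rewrite big_split /= !sum_expand4 !IH !rad_mom2 !sum_cube1.
rewrite /vdot /vsum4 !big_ord_recl expnS natrM /sgn.
ring.
Qed.

Lemma rad_mom6 n (a1 a2 a3 a4 a5 a6 : 'I_n -> R) :
  \sum_b rlin a1 b * rlin a2 b * rlin a3 b * rlin a4 b * rlin a5 b * rlin a6 b =
  (2 ^ n)%:R * (
    vdot a1 a2 * vdot a3 a4 * vdot a5 a6 + vdot a1 a2 * vdot a3 a5 * vdot a4 a6 +
    vdot a1 a2 * vdot a3 a6 * vdot a4 a5 + vdot a1 a3 * vdot a2 a4 * vdot a5 a6 +
    vdot a1 a3 * vdot a2 a5 * vdot a4 a6 + vdot a1 a3 * vdot a2 a6 * vdot a4 a5 +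
    vdot a1 a4 * vdot a2 a3 * vdot a5 a6 + vdot a1 a4 * vdot a2 a5 * vdot a3 a6 +
    vdot a1 a4 * vdot a2 a6 * vdot a3 a5 + vdot a1 a5 * vdot a2 a3 * vdot a4 a6 +
    vdot a1 a5 * vdot a2 a4 * vdot a3 a6 + vdot a1 a5 * vdot a2 a6 * vdot a3 a4 +
    vdot a1 a6 * vdot a2 a3 * vdot a4 a5 + vdot a1 a6 * vdot a2 a4 * vdot a3 a5 +
    vdot a1 a6 * vdot a2 a5 * vdot a3 a4
    - 2%:R * (vsum4 a1 a2 a3 a4 * vdot a5 a6 + vsum4 a1 a2 a3 a5 * vdot a4 a6)
    - 2%:R * (vsum4 a1 a2 a3 a6 * vdot a4 a5 + vsum4 a1 a2 a4 a5 * vdot a3 a6)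
    - 2%:R * (vsum4 a1 a2 a4 a6 * vdot a3 a5 + vsum4 a1 a2 a5 a6 * vdot a3 a4)
    - 2%:R * (vsum4 a1 a3 a4 a5 * vdot a2 a6 + vsum4 a1 a3 a4 a6 * vdot a2 a5)
    - 2%:R * (vsum4 a1 a3 a5 a6 * vdot a2 a4 + vsum4 a1 a4 a5 a6 * vdot a2 a3)
    - 2%:R * (vsum4 a2 a3 a4 a5 * vdot a1 a6 + vsum4 a2 a3 a4 a6 * vdot a1 a5)
    - 2%:R * (vsum4 a2 a3 a5 a6 * vdot a1 a4 + vsum4 a2 a4 a5 a6 * vdot a1 a3)
    - 2%:R * (vsum4 a3 a4 a5 a6 * vdot a1 a2)
    + 16%:R * vsum6 a1 a2 a3 a4 a5 a6).
Proof.
elim: n a1 a2 a3 a4 a5 a6 => [|n IH] a1 a2 a3 a4 a5 a6.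
  rewrite big1 => [|b _]; last by rewrite /rlin big_ord0 !mul0r.
  by rewrite /vdot /vsum4 /vsum6 !big_ord0 expn0; ring.
rewrite sum_cube_cons.
under eq_bigr => b _ do rewrite !rlin_cons.
rewrite big_split /= !sum_expand6 !IH !rad_mom4 !rad_mom2 !sum_cube1.
rewrite /vdot /vsum4 /vsum6 !big_ord_recl expnS natrM /sgn.
ring.
Qed.
End RademacherMoments.

(* Odd moments vanish over any ordered ring: flipping every sign is a
   bijection of the cube that negates every linear form. *)
Section OddMoments.
Variable R : realDomainType.

Definition cube_neg n (b : {ffun 'I_n -> bool}) : {ffun 'I_n -> bool} :=
  [ffun i => ~~ b i].

Lemma rlin_neg n (a : 'I_n -> R) b : rlin a (cube_neg b) = - rlin a b.
Proof.
rewrite /rlin -sumrN; apply: eq_bigr => i _; rewrite ffunE /sgn.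
by case: (b i); rewrite /= ?mulrN ?mulr1 ?opprK.
Qed.

Lemma sum_cube_odd n (F : {ffun 'I_n -> bool} -> R) :
  (forall b, F (cube_neg b) = - F b) -> \sum_b F b = 0.
Proof.
move=> F_odd.
have neg_inj : injective (@cube_neg n).
  move=> b1 b2 /ffunP eq12; apply/ffunP => i.
  by have := eq12 i; rewrite !ffunE => /negb_inj.
have : \sum_b F b = - \sum_b F b.
  by rewrite {1}(reindex_inj neg_inj) /= -sumrN; apply: eq_bigr => b _; rewrite F_odd.
lra.
Qed.

Lemma rad_mom1 n (a1 : 'I_n -> R) : \sum_b rlin a1 b = 0.
Proof. by apply: sum_cube_odd => b; rewrite rlin_neg. Qed.

Lemma rad_mom3 n (a1 a2 a3 : 'I_n -> R) :
  \sum_b rlin a1 b * rlin a2 b * rlin a3 b = 0.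
Proof. by apply: sum_cube_odd => b; rewrite !rlin_neg; ring. Qed.

Lemma rad_mom5 n (a1 a2 a3 a4 a5 : 'I_n -> R) :
  \sum_b rlin a1 b * rlin a2 b * rlin a3 b * rlin a4 b * rlin a5 b = 0.
Proof. by apply: sum_cube_odd => b; rewrite !rlin_neg; ring. Qed.
End OddMoments.

Section ScoreMoments.
Variables (R : realType) (n : nat) (eps : 'I_n -> R) (V P : 'M[R]_n).
(* The only properties of V = Z (Z' D_eps^2 Z)^-1 Z' and P = D_eps V D_eps
   that the moment computation uses. *)
Hypothesis V_sym : forall i j, V i j = V j i.
Hypothesis V_idem : forall i j, \sum_l V i l * V j l * eps l ^+ 2 = V i j.
Hypothesis P_def : forall i j, P i j = eps i * V i j * eps j.

Lemma P_sym i j : P i j = P j i.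
Proof. by rewrite !P_def V_sym; ring. Qed.

(* Rows of P and of V D_eps, and the coordinate vectors e_i: then
   (P r)_i = rlin (Prow i) r, (V D_eps r)_i = rlin (Mrow i) r, r_i = rlin (ev i) r. *)
Definition Prow i : 'I_n -> R := fun l => P i l.
Definition Mrow i : 'I_n -> R := fun l => V i l * eps l.
Definition ev (i : 'I_n) : 'I_n -> R := fun l => if l == i then 1 else 0.

Lemma rlin_ev i b : rlin (ev i) b = sgn R (b i).
Proof.
rewrite /rlin (bigD1 i) //= /ev eqxx mul1r big1 ?addr0 // => l /negbTE ->.
by rewrite mul0r.
Qed.

Lemma sum_at (i : 'I_n) (F : 'I_n -> R) :
  (forall l, l != i -> F l = 0) -> \sum_l F l = F i.
Proof. by move=> F0; rewrite (bigD1 i) //= big1 ?addr0. Qed.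

Lemma ev_off i l : l != i -> ev i l = 0.
Proof. by rewrite /ev => /negbTE->. Qed.

Lemma vdot_ev1 i (a : 'I_n -> R) : vdot (ev i) a = a i.
Proof. by rewrite /vdot (@sum_at i) => [|l /ev_off->]; rewrite /ev ?eqxx; ring. Qed.
Lemma vdot_ev2 i (a : 'I_n -> R) : vdot a (ev i) = a i.
Proof. by rewrite /vdot (@sum_at i) => [|l /ev_off->]; rewrite /ev ?eqxx; ring. Qed.
Lemma vsum4_ev1 i (a2 a3 a4 : 'I_n -> R) : vsum4 (ev i) a2 a3 a4 = a2 i * a3 i * a4 i.
Proof. by rewrite /vsum4 (@sum_at i) => [|l /ev_off->]; rewrite /ev ?eqxx; ring. Qed.
Lemma vsum4_ev2 i (a1 a3 a4 : 'I_n -> R) : vsum4 a1 (ev i) a3 a4 = a1 i * a3 i * a4 i.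
Proof. by rewrite /vsum4 (@sum_at i) => [|l /ev_off->]; rewrite /ev ?eqxx; ring. Qed.
Lemma vsum4_ev3 i (a1 a2 a4 : 'I_n -> R) : vsum4 a1 a2 (ev i) a4 = a1 i * a2 i * a4 i.
Proof. by rewrite /vsum4 (@sum_at i) => [|l /ev_off->]; rewrite /ev ?eqxx; ring. Qed.
Lemma vsum4_ev4 i (a1 a2 a3 : 'I_n -> R) : vsum4 a1 a2 a3 (ev i) = a1 i * a2 i * a3 i.
Proof. by rewrite /vsum4 (@sum_at i) => [|l /ev_off->]; rewrite /ev ?eqxx; ring. Qed.
Lemma vsum6_ev2 i (a1 a3 a4 a5 a6 : 'I_n -> R) :
  vsum6 a1 (ev i) a3 a4 a5 a6 = a1 i * a3 i * a4 i * a5 i * a6 i.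
Proof. by rewrite /vsum6 (@sum_at i) => [|l /ev_off->]; rewrite /ev ?eqxx; ring. Qed.

Lemma vdot_MM i j : vdot (Mrow i) (Mrow j) = V i j.
Proof. by rewrite -V_idem /vdot; apply: eq_bigr => l _; rewrite /Mrow; ring. Qed.

Lemma vdot_MP i j : vdot (Mrow i) (Prow j) = V i j * eps j.
Proof.
rewrite /vdot -V_idem mulr_suml; apply: eq_bigr => l _.
by rewrite /Mrow /Prow P_def V_sym; ring.
Qed.

Lemma vdot_PM i j : vdot (Prow i) (Mrow j) = V i j * eps i.
Proof.
rewrite /vdot -V_idem mulr_suml; apply: eq_bigr => l _.
by rewrite /Mrow /Prow P_def V_sym; ring.
Qed.

Lemma vdot_PP i j : vdot (Prow i) (Prow j) = P i j.
Proof.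
rewrite /vdot P_def -V_idem mulr_sumr mulr_suml; apply: eq_bigr => l _.
by rewrite /Prow !P_def (V_sym j l); ring.
Qed.

(* The score is c (sum_i x_i zterm_i - sum_i a_i aterm_i), where
   zterm_i = (P r)_i r_i (V D_eps r)_i - (V D_eps r)_i comes from the
   instrument part and aterm_i = r_i (P r)_i - (P r)_i^2 from D_a. *)
Definition zterm i b :=
  rlin (Prow i) b * rlin (ev i) b * rlin (Mrow i) b - rlin (Mrow i) b.
Definition aterm i b :=
  rlin (ev i) b * rlin (Prow i) b - rlin (Prow i) b * rlin (Prow i) b.

(* Entries of the kernel of the instrument part: KL is the matrix of
   Omega^{L,z}, KH the matrix V (.) W of Omega^{H,z}. *)
Definition KL i j := (1 - P i i) * V i j * (1 - P j j)
  + (if i == j then P i i * V i i * (1 - 2%:R * P i i) else 0)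
  + V i j * P i j * P i j.
Definition KH (i1 i2 : 'I_n) : R :=
  if i1 == i2 then
    - 2 * V i1 i1 * P i1 i1 * (1 - 2 * P i1 i1)
    - 2 * \sum_j (V i1 j ^+ 2 * eps j ^+ 2 * P i1 j ^+ 2)
  else
    V i1 i2 * ((P i1 i1 * P i2 i2 + P i1 i2 ^+ 2) * (3 - 4 * P i1 i1 - 4 * P i2 i2)
               - 2 * P i1 i1 - 2 * P i2 i2 + 2 * (P i1 i1 + P i2 i2) ^+ 2).
Definition Kz i j := KL i j + KH i j.

Definition Qa i j := (if i == j then P i i else 0) - P i j ^+ 2.
Definition Ka i j := Qa i j - 2%:R * \sum_l Qa i l * Qa l j.

Lemma zterm_mean i : \sum_b zterm i b = 0.
Proof. by rewrite /zterm sumrB rad_mom3 rad_mom1 subrr. Qed.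

Lemma aterm_mean i : \sum_b aterm i b = 0.
Proof.
by rewrite /aterm sumrB !rad_mom2 vdot_ev1 vdot_PP subrr.
Qed.

Lemma vsum4_PMPM i :
  vsum4 (Prow i) (Mrow i) (Prow i) (Mrow i) =
  \sum_l V i l ^+ 2 * eps l ^+ 2 * P i l ^+ 2.
Proof. by apply: eq_bigr => l _; rewrite /Mrow /Prow; ring. Qed.

Lemma zterm_cov i j : \sum_b zterm i b * zterm j b = (2 ^ n)%:R * Kz i j.
Proof.
rewrite (eq_bigr (fun b =>
      rlin (Prow i) b * rlin (ev i) b * rlin (Mrow i) b
        * rlin (Prow j) b * rlin (ev j) b * rlin (Mrow j) b
    - rlin (Prow i) b * rlin (ev i) b * rlin (Mrow i) b * rlin (Mrow j) b
    - rlin (Mrow i) b * rlin (Prow j) b * rlin (ev j) b * rlin (Mrow j) b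
    + rlin (Mrow i) b * rlin (Mrow j) b)); last first.
  by move=> b _; rewrite /zterm; ring.
rewrite big_split !sumrB /= rad_mom6 !rad_mom4 rad_mom2.
rewrite vsum6_ev2 ?vsum4_ev1 ?vsum4_ev2 ?vsum4_ev3 ?vsum4_ev4.
rewrite ?vdot_ev1 ?vdot_ev2 ?vdot_MM ?vdot_MP ?vdot_PM ?vdot_PP.
have [<-|neq_ij] := eqVneq i j.
  by rewrite vsum4_PMPM /Kz /KL /KH /Mrow /Prow /ev !eqxx (P_def i i); ring.
rewrite /Kz /KL /KH /Mrow /Prow /ev (negbTE neq_ij) ?(eq_sym j i) ?(negbTE neq_ij).
by rewrite (P_def i i) (P_def i j) (P_def j i) (P_def j j) (V_sym j i); ring.
Qed.

Lemma vsum4_PPPP i j :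
  vsum4 (Prow i) (Prow i) (Prow j) (Prow j) = \sum_l P i l ^+ 2 * P l j ^+ 2.
Proof. by apply: eq_bigr => l _; rewrite /Prow (P_sym j l); ring. Qed.

Lemma Qa_sq i j : \sum_l Qa i l * Qa l j =
  P i i * Qa i j - P i j ^+ 2 * P j j + \sum_l P i l ^+ 2 * P l j ^+ 2.
Proof.
rewrite (eq_bigr (fun l => (if l == i then P i i * Qa i j else 0)
    - (if l == j then P i j ^+ 2 * P j j else 0) + P i l ^+ 2 * P l j ^+ 2)).
  rewrite big_split /= sumrB (@sum_at i) => [|l /negbTE-> //].
  by rewrite (@sum_at j) ?eqxx => [|l /negbTE->].
move=> l _; rewrite /Qa (eq_sym i l).
have [->|nli] := eqVneq l i.
  by case: eqP => [->|_]; ring.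
by have [->|nlj] := eqVneq l j; ring.
Qed.

Lemma aterm_cov i j : \sum_b aterm i b * aterm j b = (2 ^ n)%:R * Ka i j.
Proof.
rewrite (eq_bigr (fun b =>
      rlin (ev i) b * rlin (Prow i) b * rlin (ev j) b * rlin (Prow j) b
    - rlin (ev i) b * rlin (Prow i) b * rlin (Prow j) b * rlin (Prow j) b
    - rlin (Prow i) b * rlin (Prow i) b * rlin (ev j) b * rlin (Prow j) b
    + rlin (Prow i) b * rlin (Prow i) b * rlin (Prow j) b * rlin (Prow j) b));
  last by move=> b _; rewrite /aterm; ring.
rewrite big_split !sumrB /= !rad_mom4.
rewrite ?vsum4_ev1 ?vsum4_ev2 ?vsum4_ev3 ?vsum4_ev4 ?vdot_ev1 ?vdot_ev2 ?vdot_PP.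
rewrite vsum4_PPPP /Ka Qa_sq /Qa /Prow /ev.
have [<-|neq_ij] := eqVneq i j; first by rewrite ?eqxx; ring.
by rewrite ?(negbTE neq_ij) ?(eq_sym j i) ?(negbTE neq_ij) (P_sym j i); ring.
Qed.

(* The two parts of the score are uncorrelated: their product is odd. *)
Lemma zterm_aterm i j : \sum_b zterm i b * aterm j b = 0.
Proof.
rewrite (eq_bigr (fun b =>
      rlin (Prow i) b * rlin (ev i) b * rlin (Mrow i) b * rlin (ev j) b * rlin (Prow j) b
    - rlin (Prow i) b * rlin (ev i) b * rlin (Mrow i) b * rlin (Prow j) b * rlin (Prow j) b
    - rlin (Mrow i) b * rlin (ev j) b * rlin (Prow j) b
    + rlin (Mrow i) b * rlin (Prow j) b * rlin (Prow j) b));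
  last by move=> b _; rewrite /zterm /aterm; ring.
by rewrite big_split !sumrB /= !rad_mom5 !rad_mom3 !subrr add0r.
Qed.

Definition score c (x a : 'I_n -> R) b :=
  c * (\sum_i x i * zterm i b - \sum_i a i * aterm i b).

Lemma score_mean c x a : \sum_b score c x a b = 0.
Proof.
rewrite /score -mulr_sumr sumrB [X in X - _]exchange_big [X in _ - X]exchange_big.
by rewrite !big1 ?subrr ?mulr0 // => i _; rewrite -mulr_sumr ?zterm_mean ?aterm_mean mulr0.
Qed.

Lemma score_cov c x1 a1 x2 a2 :
  \sum_b score c x1 a1 b * score c x2 a2 b =
  (2 ^ n)%:R * (c * c) * (\sum_i \sum_j x1 i * x2 j * Kz i j
                          + \sum_i \sum_j a1 i * a2 j * Ka i j).
Proof.
pose F i j b := x1 i * x2 j * (zterm i b * zterm j b)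
  - x1 i * a2 j * (zterm i b * aterm j b) - a1 i * x2 j * (zterm j b * aterm i b)
  + a1 i * a2 j * (aterm i b * aterm j b).
have expand b : score c x1 a1 b * score c x2 a2 b = c * c * \sum_i \sum_j F i j b.
  rewrite /score -!sumrB mulrACA mulr_suml; congr (_ * _).
  by apply: eq_bigr => i _; rewrite mulr_sumr; apply: eq_bigr => j _; rewrite /F; ring.
have moments i j : \sum_b F i j b =
    (2 ^ n)%:R * (x1 i * x2 j * Kz i j + a1 i * a2 j * Ka i j).
  rewrite /F big_split !sumrB /= -!mulr_sumr zterm_cov aterm_cov.
  by rewrite !zterm_aterm; ring.
rewrite (eq_bigr _ (fun b _ => expand b)) -mulr_sumr exchange_big /=.
under eq_bigr => i _ do rewrite exchange_big /=.
under eq_bigr => i _ do under eq_bigr => j _ do rewrite moments.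
rewrite -big_split /= !mulr_sumr; apply: eq_bigr => i _.
by rewrite mulrDr !mulr_sumr -big_split; apply: eq_bigr => j _ /=; ring.
Qed.
End ScoreMoments.
Arguments ev {R n} i.

Section MatrixEntries.
Variables (R : realType) (n : nat).

Lemma DvecE (v : 'I_n -> R) i j : Dvec v i j = if i == j then v i else 0.
Proof. by rewrite /Dvec !mxE; case: eqP. Qed.

Lemma mul_Dvec m (X : 'M[R]_(m, n)) (v : 'I_n -> R) i j :
  (X *m Dvec v) i j = X i j * v j.
Proof. by rewrite /Dvec mul_mx_diag !mxE. Qed.

Lemma Dvec_mul m (X : 'M[R]_(n, m)) (v : 'I_n -> R) i j :
  (Dvec v *m X) i j = v i * X i j.
Proof. by rewrite /Dvec mul_diag_mx !mxE. Qed.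

Lemma I_sub_Dmat (c : R) (A : 'M[R]_n) :
  1%:M - c *: Dmat A = Dvec (fun i => 1 - c * A i i).
Proof.
apply/matrixP => i j; rewrite /Dvec /Dmat !mxE.
by case: eqP => _; rewrite ?mulr1n ?mulr0n ?mulr0 ?subr0.
Qed.

Lemma I_sub_Dmat1 (A : 'M[R]_n) : 1%:M - Dmat A = Dvec (fun i => 1 - A i i).
Proof.
rewrite -[X in _ - X]scale1r I_sub_Dmat; congr Dvec.
by apply: funext => i; rewrite mul1r.
Qed.

Lemma addmx_entry (A B : 'M[R]_n) i j : (A + B) i j = A i j + B i j.
Proof. by rewrite mxE. Qed.

Lemma hadmE (A B : 'M[R]_n) i j : hadm A B i j = A i j * B i j.
Proof. by rewrite mxE. Qed.

Lemma bilinE (X : 'M[R]_n) (K : 'I_n -> 'I_n -> R) :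
  (forall i j, X i j = K i j) ->
  forall m1 m2 (A : 'M[R]_(n, m1)) (B : 'M[R]_(n, m2)) l1 l2,
  ((col l1 A)^T *m X *m col l2 B) 0 0 = \sum_i \sum_j A i l1 * K i j * B j l2.
Proof.
move=> XK m1 m2 A B l1 l2; rewrite mxE exchange_big /=; apply: eq_bigr => j _.
rewrite !mxE mulr_suml; apply: eq_bigr => i _; by rewrite !mxE XK.
Qed.

Lemma trace_Dvec (v : 'I_n -> R) (X : 'M[R]_n) :
  \tr (Dvec v *m X) = \sum_i v i * X i i.
Proof. by apply: eq_bigr => i _; rewrite Dvec_mul. Qed.
End MatrixEntries.

Section ScoreMatrix.
Variables (R : realType) (n : nat) (eps : 'I_n -> R) (V P : 'M[R]_n).
Hypothesis P_sym : forall i j, P i j = P j i.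

Lemma rsignE (b : {ffun 'I_n -> bool}) i j : rsign b i j = sgn R (b i).
Proof. by rewrite mxE. Qed.

Lemma P_rsign b i : (P *m rsign b) i 0 = rlin (Prow P i) b.
Proof. by rewrite mxE; apply: eq_bigr => l _; rewrite mxE. Qed.

Lemma rsign_P b i : ((rsign b)^T *m P) 0 i = rlin (Prow P i) b.
Proof. by rewrite mxE; apply: eq_bigr => l _; rewrite !mxE P_sym mulrC. Qed.

Lemma VD_rsign b i : (V *m Dvec eps *m rsign b) i 0 = rlin (Mrow eps V i) b.
Proof.
rewrite -mulmxA mxE; apply: eq_bigr => l _.
by rewrite Dvec_mul mxE /Mrow mulrA.
Qed.

Lemma score_matrixE (c : R) (xb : 'cV[R]_n) (av : 'I_n -> R) b :
  let r := rsign b in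
  (- (c *: (xb^T *m V *m Dvec eps *m r))
   - c *: (r^T *m Dvec av *m P *m r)
   + c *: (r^T *m P *m Dvec av *m P *m r)
   + c *: (r^T *m P *m Dvec (fun i => r i 0) *m Dvec (fun i => xb i 0)
             *m V *m Dvec eps *m r)) 0 0
  = score eps V P c (fun i => xb i 0) av b.
Proof.
move=> r.
have entries (A B C D : 'M[R]_1) :
    (- (c *: A) - c *: B + c *: C + c *: D) 0 0 =
    - (c * A 0 0) - c * B 0 0 + c * C 0 0 + c * D 0 0 by rewrite !mxE.
have lin_z : (xb^T *m V *m Dvec eps *m r) 0 0 = \sum_i xb i 0 * rlin (Mrow eps V i) b.
  by rewrite -!mulmxA mxE; apply: eq_bigr => i _; rewrite mxE !mulmxA VD_rsign.
have quad_Da : (r^T *m Dvec av *m P *m r) 0 0 =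
    \sum_i av i * (rlin (ev i) b * rlin (Prow P i) b).
  rewrite -mulmxA mxE; apply: eq_bigr => i _.
  by rewrite mul_Dvec P_rsign rlin_ev mxE rsignE; ring.
have quad_PDaP : (r^T *m P *m Dvec av *m P *m r) 0 0 =
    \sum_i av i * (rlin (Prow P i) b * rlin (Prow P i) b).
  rewrite -mulmxA mxE; apply: eq_bigr => i _.
  by rewrite mul_Dvec P_rsign rsign_P; ring.
have cubic_z : (r^T *m P *m Dvec (fun i => r i 0) *m Dvec (fun i => xb i 0)
             *m V *m Dvec eps *m r) 0 0 =
    \sum_i xb i 0 * (rlin (Prow P i) b * rlin (ev i) b * rlin (Mrow eps V i) b).
  rewrite -[in LHS](mulmxA _ V) -(mulmxA _ (V *m _)) mxE; apply: eq_bigr => i _.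
  by rewrite VD_rsign !mul_Dvec rsign_P rlin_ev rsignE; ring.
rewrite entries lin_z quad_Da quad_PDaP cubic_z /score /zterm /aterm.
rewrite mulrBr !mulr_sumr -!sumrN -!big_split /=.
by apply: eq_bigr => i _; ring.
Qed.
End ScoreMatrix.

Section Projection.
Variables (R : realType) (n k : nat) (Z : 'M[R]_(n, k)) (eps : 'I_n -> R).
Hypothesis ZDZ_unit : Z^T *m (Dvec eps *m Dvec eps) *m Z \in unitmx.
Local Notation V := (Vmat Z eps).
Local Notation P := (Pmat Z eps).

Lemma Vmat_sym i j : V i j = V j i.
Proof.
suff V_tr : V^T = V by rewrite -{1}V_tr mxE.
rewrite /Vmat !trmx_mul trmxK trmx_inv !trmx_mul trmxK.
by rewrite /Dvec !tr_diag_mx !mulmxA.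
Qed.

Lemma Vmat_idem i j : \sum_l V i l * V j l * eps l ^+ 2 = V i j.
Proof.
have VDV : V *m (Dvec eps *m Dvec eps) *m V = V.
  rewrite /Vmat; set A := Z^T *m _ *m Z.
  have -> : Z *m invmx A *m Z^T *m (Dvec eps *m Dvec eps) *m (Z *m invmx A *m Z^T)
      = Z *m (invmx A *m A *m invmx A) *m Z^T by rewrite /A !mulmxA.
  by rewrite mulVmx // mul1mx.
transitivity ((V *m (Dvec eps *m Dvec eps) *m V) i j); last by rewrite VDV.
rewrite -(mulmxA V) -(mulmxA (Dvec eps)) mxE; apply: eq_bigr => l _.
by rewrite !Dvec_mul (Vmat_sym j l); ring.
Qed.

Lemma Pmat_entry i j : P i j = eps i * V i j * eps j.
Proof. by rewrite /Pmat mul_Dvec Dvec_mul. Qed.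
End Projection.

Section OmegaKernels.
Variables (R : realType) (n k : nat) (Z : 'M[R]_(n, k)) (eps : 'I_n -> R).
Local Notation V := (Vmat Z eps).
Local Notation P := (Pmat Z eps).

Lemma OmegaLz_entry i j :
  ((1%:M - Dmat P) *m V *m (1%:M - Dmat P) + Dmat P *m Dmat V *m (1%:M - 2%:R *: Dmat P)
    + hadm (hadm V P) P) i j = KL V P i j.
Proof.
rewrite I_sub_Dmat1 I_sub_Dmat !addmx_entry !hadmE !mul_Dvec !Dvec_mul.
rewrite /KL /Dmat DvecE !Pmat_entry; case: eqP => [->|_] /=; ring.
Qed.

Lemma VWmat_entry i j : VWmat Z eps i j = KH eps V P i j.
Proof. by rewrite mxE. Qed.

Lemma Qmat_entry i j : (Dmat P - hadm P P) i j = Qa P i j.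
Proof.
by rewrite addmx_entry /Dmat DvecE [X in _ + X]mxE hadmE /Qa expr2 eq_sym.
Qed.

Lemma Qmat_sq_entry i j :
  ((Dmat P - hadm P P) *m (Dmat P - hadm P P)) i j = \sum_l Qa P i l * Qa P l j.
Proof. by rewrite mxE; apply: eq_bigr => l _; rewrite !Qmat_entry. Qed.

Lemma OmegaLu_trace (s : 'I_n -> R) :
  \tr (Dvec s *m Dmat V *m (1%:M - Dmat P)) = \sum_i s i * (V i i * (1 - P i i)).
Proof.
rewrite -mulmxA trace_Dvec; apply: eq_bigr => i _.
by rewrite I_sub_Dmat1 mul_Dvec /Dmat DvecE eqxx.
Qed.

Lemma OmegaHu_trace (s : 'I_n -> R) :
  \tr (Dvec s *m (Dmat V *m Dmat P *m (1%:M - 2%:R *: Dmat P)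
                  + hadm (hadm (V *m Dvec eps) (V *m Dvec eps) *m hadm P P) 1%:M)) =
  \sum_i s i * (V i i * P i i * (1 - 2%:R * P i i)
                + \sum_m (V i m * eps m) ^+ 2 * P m i ^+ 2).
Proof.
rewrite trace_Dvec; apply: eq_bigr => i _; congr (_ * _).
rewrite I_sub_Dmat addmx_entry hadmE [1%:M i i]mxE eqxx mulr1n mulr1.
rewrite !mul_Dvec /Dmat !DvecE eqxx; congr (_ + _).
by rewrite mxE; apply: eq_bigr => m _; rewrite !hadmE !mul_Dvec; ring.
Qed.
End OmegaKernels.

Section Expectation.
Context d (T : measurableType d) (R : realType) (Pu : probability T R).

Definition has_mean (f : T -> R) (m : R) :=
  Pu.-integrable setT (fun w => (f w)%:E) /\ (\int[Pu]_w (f w)%:E = m%:E)%E.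

Lemma has_mean_ext (f g : T -> R) m :
  (forall w, f w = g w) -> has_mean f m -> has_mean g m.
Proof.
move=> fg [f_int f_mean]; have eq_fg : (fun w => (f w)%:E) = (fun w => (g w)%:E).
  by apply: funext => w; rewrite fg.
by rewrite /has_mean -eq_fg.
Qed.

Lemma has_mean_cst (c : R) : has_mean (fun _ => c) c.
Proof.
split; first exact: finite_measure_integrable_cst.
by rewrite integral_cst // -[RHS]mule1; congr (_ * _)%E; exact: probability_setT.
Qed.

Lemma has_meanD (f g : T -> R) mf mg :
  has_mean f mf -> has_mean g mg -> has_mean (fun w => f w + g w) (mf + mg).
Proof.
move=> [f_int f_mean] [g_int g_mean]; split; first exact: (integrableD measurableT f_int g_int).
by rewrite (eq_integral (fun w => (f w)%:E + (g w)%:E)%E) // integralD // f_mean g_mean.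
Qed.

Lemma has_meanZ (k : R) (f : T -> R) m :
  has_mean f m -> has_mean (fun w => k * f w) (k * m).
Proof.
move=> [f_int f_mean]; split; first exact: (integrableZl measurableT k f_int).
by rewrite (eq_integral (fun w => k%:E * (f w)%:E)%E) // integralZl // f_mean.
Qed.

Lemma has_mean_sum (I : Type) (s : seq I) (F : I -> T -> R) (M : I -> R) :
  (forall i, has_mean (F i) (M i)) ->
  has_mean (fun w => \sum_(i <- s) F i w) (\sum_(i <- s) M i).
Proof.
move=> FM; elim: s => [|i s IH].
  by rewrite big_nil; apply: has_mean_ext (has_mean_cst 0) => w; rewrite big_nil.
rewrite big_cons; apply: has_mean_ext (has_meanD (FM i) IH) => w.
by rewrite big_cons.
Qed.

(* Square-integrable random variables are integrable, and so are their
   products (|fg| <= f^2 + g^2). *)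
Lemma integrable_of_sq (f : T -> R) : measurable_fun setT f ->
  Pu.-integrable setT (fun w => (f w ^+ 2)%:E) -> Pu.-integrable setT (fun w => (f w)%:E).
Proof.
move=> f_mes f2_int; have [one_int _] := has_mean_cst 1.
apply: (le_integrable measurableT _ _ (integrableD measurableT one_int f2_int)).
  exact/measurable_EFinP.
move=> w _; rewrite !abse_EFin lee_fin [X in _ <= X]ger0_norm; last first.
  by have := sqr_ge0 (f w); lra.
rewrite -(real_normK (num_real (f w))); have := normr_ge0 (f w); nra.
Qed.

Lemma integrable_mul (f g : T -> R) :
  measurable_fun setT f -> measurable_fun setT g ->
  Pu.-integrable setT (fun w => (f w ^+ 2)%:E) -> Pu.-integrable setT (fun w => (g w ^+ 2)%:E) ->
  Pu.-integrable setT (fun w => (f w * g w)%:E).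
Proof.
move=> f_mes g_mes f2_int g2_int.
apply: (le_integrable measurableT _ _ (integrableD measurableT f2_int g2_int)).
  by apply/measurable_EFinP; exact: measurable_funM.
move=> w _; rewrite !abse_EFin lee_fin [X in _ <= X]ger0_norm; last first.
  by apply: addr_ge0; exact: sqr_ge0.
rewrite normrM -(real_normK (num_real (f w))) -(real_normK (num_real (g w))).
have := normr_ge0 (f w); have := normr_ge0 (g w); nra.
Qed.

Lemma has_mean_affine_prod (f g : T -> R) (z1 z2 K C : R) :
  has_mean f 0 -> has_mean g 0 -> has_mean (fun w => f w * g w) C ->
  has_mean (fun w => (z1 + f w) * (z2 + g w) * K) ((z1 * z2 + C) * K).
Proof.
move=> f0 g0 fgC.
have := has_meanD (has_meanD (has_meanD (has_mean_cst (z1 * z2 * K))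
  (has_meanZ (z1 * K) g0)) (has_meanZ (z2 * K) f0)) (has_meanZ K fgC).
have -> : z1 * z2 * K + z1 * K * 0 + z2 * K * 0 + K * C = (z1 * z2 + C) * K by ring.
by apply: has_mean_ext => w; ring.
Qed.

Lemma has_mean_bilinear m1 m2 (f : 'I_m1 -> T -> R) (g : 'I_m2 -> T -> R)
    (z1 : 'I_m1 -> R) (z2 : 'I_m2 -> R) (K C : 'I_m1 -> 'I_m2 -> R) :
  (forall i, has_mean (f i) 0) -> (forall j, has_mean (g j) 0) ->
  (forall i j, has_mean (fun w => f i w * g j w) (C i j)) ->
  has_mean (fun w => \sum_i \sum_j (z1 i + f i w) * (z2 j + g j w) * K i j)
           (\sum_i \sum_j (z1 i * z2 j + C i j) * K i j).
Proof.
move=> f0 g0 fgC; apply: has_mean_sum => i; apply: has_mean_sum => j.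
exact: has_mean_affine_prod.
Qed.
End Expectation.

Section Lemma2.
Variables (R : realType) (n k p : nat) (Z : 'M[R]_(n, k)) (eps : 'I_n -> R).
Variables (Pi : 'M[R]_(k, p)) (a : 'M[R]_(n, p)).
Hypothesis ZDZ_unit : Z^T *m (Dvec eps *m Dvec eps) *m Z \in unitmx.
Local Notation V := (Vmat Z eps).
Local Notation P := (Pmat Z eps).
Local Notation zb := (Z *m Pi).
Local Notation c := (n%:R^-1 : R).

Lemma scoreR_score (U : 'M[R]_(n, p)) l b :
  scoreR Z eps Pi a U l b = score eps V P c (fun i => zb i l + U i l) (fun i => a i l) b.
Proof.
rewrite /scoreR score_matrixE; last exact: P_sym (@Vmat_sym _ _ _ Z eps) (Pmat_entry Z eps).
by congr score; apply: funext => i; rewrite !mxE.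
Qed.

Lemma Er_scoreR (U : 'M[R]_(n, p)) l : Er (fun b => scoreR Z eps Pi a U l b) = 0.
Proof.
rewrite /Er (eq_bigr _ (fun b _ => scoreR_score U l b)) score_mean ?mulr0 //.
- exact: Vmat_sym.
- exact: Vmat_idem.
- exact: Pmat_entry.
Qed.

Lemma Er_scoreR2 (U : 'M[R]_(n, p)) l1 l2 :
  n%:R * Er (fun b => scoreR Z eps Pi a U l1 b * scoreR Z eps Pi a U l2 b) =
  c * (\sum_i \sum_j (zb i l1 + U i l1) * (zb j l2 + U j l2) * Kz eps V P i j
       + \sum_i \sum_j a i l1 * a j l2 * Ka P i j).
Proof.
rewrite /Er (eq_bigr _ (fun b _ => congr2 *%R (scoreR_score U l1 b) (scoreR_score U l2 b))).
rewrite score_cov; [|exact: Vmat_sym|exact: Vmat_idem|exact: Pmat_entry].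
rewrite card_ffun card_bool card_ord -mulrA mulKf ?pnatr_eq0 ?expn_eq0 //.
have [->|n_neq0] := eqVneq (n%:R : R) 0; first by rewrite invr0 !mul0r.
by rewrite !mulrA mulfV ?mul1r.
Qed.

Lemma Omega_z l1 l2 : OmegaLz Z eps Pi l1 l2 + OmegaHz Z eps Pi l1 l2 =
  c * \sum_i \sum_j zb i l1 * zb j l2 * Kz eps V P i j.
Proof.
rewrite /OmegaLz /OmegaHz /= (bilinE (OmegaLz_entry Z eps)).
rewrite (bilinE (VWmat_entry Z eps)) -mulrDr -big_split; congr (_ * _).
by apply: eq_bigr => i _; rewrite -big_split; apply: eq_bigr => j _; rewrite /Kz /=; ring.
Qed.

Lemma Omega_a l1 l2 : OmegaLa Z eps a l1 l2 + OmegaHa Z eps a l1 l2 =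
  c * \sum_i \sum_j a i l1 * a j l2 * Ka P i j.
Proof.
rewrite /OmegaLa /OmegaHa /= (bilinE (Qmat_entry Z eps)).
rewrite (bilinE (Qmat_sq_entry Z eps)) !mulr_sumr -big_split.
apply: eq_bigr => i _; rewrite !mulr_sumr -big_split.
by apply: eq_bigr => j _; rewrite /Ka /=; ring.
Qed.

Lemma Omega_u (SigU : 'I_n -> 'M[R]_p) l1 l2 :
  OmegaLu Z eps SigU l1 l2 + OmegaHu Z eps SigU l1 l2 =
  c * \sum_i SigU i l1 l2 * Kz eps V P i i.
Proof.
rewrite /OmegaLu /OmegaHu /DSigU /= OmegaLu_trace OmegaHu_trace.
rewrite [X in X + _]mulr_sumr [X in _ + X]mulr_sumr [RHS]mulr_sumr -big_split.
apply: eq_bigr => i _ /=.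
have PV_sq : \sum_m (V i m * eps m) ^+ 2 * P m i ^+ 2 =
             \sum_m V i m ^+ 2 * eps m ^+ 2 * P i m ^+ 2.
  apply: eq_bigr => m _.
  by rewrite (P_sym (@Vmat_sym _ _ _ Z eps) (Pmat_entry Z eps) m i); ring.
by rewrite /Kz /KL /KH eqxx PV_sq; ring.
Qed.

Lemma Omega_sum (SigU : 'I_n -> 'M[R]_p) l1 l2 :
  OmegaL Z eps Pi a SigU l1 l2 + OmegaH Z eps Pi a SigU l1 l2 =
  c * (\sum_i \sum_j (zb i l1 * zb j l2 + (if i == j then SigU i l1 l2 else 0))
                     * Kz eps V P i j
       + \sum_i \sum_j a i l1 * a j l2 * Ka P i j).
Proof.
have noise_diag : \sum_i \sum_j (zb i l1 * zb j l2 + (if i == j then SigU i l1 l2 else 0))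
                                 * Kz eps V P i j =
    \sum_i \sum_j zb i l1 * zb j l2 * Kz eps V P i j + \sum_i SigU i l1 l2 * Kz eps V P i i.
  rewrite -big_split; apply: eq_bigr => i _ /=.
  under eq_bigr => j _ do rewrite mulrDl.
  rewrite big_split /=; congr (_ + _).
  by rewrite (@sum_at _ _ i) ?eqxx // => j; rewrite eq_sym => /negbTE->; rewrite mul0r.
have regroup (x1 x2 x3 y1 y2 y3 : R) :
    x1 + x2 + x3 + (y1 + y2 + y3) = (x1 + y1) + (x2 + y2) + (x3 + y3) by ring.
by rewrite /OmegaL /OmegaH regroup Omega_z Omega_a Omega_u noise_diag; ring.
Qed.
End Lemma2.

Unset Implicit Arguments. Set Strict Implicit.

Theorem lemma2 (R : realType) (d : measure_display) (T : measurableType d)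
  (Pu : probability T R) (n k p : nat)
  (Z : 'M[R]_(n, k)) (eps : 'I_n -> R) (Pi : 'M[R]_(k, p))
  (a : 'M[R]_(n, p)) (SigU : 'I_n -> 'M[R]_p)
  (u : 'I_n -> 'I_p -> T -> R) :
  Z^T *m (Dvec eps *m Dvec eps) *m Z \in unitmx ->
  (forall i l, measurable_fun setT (u i l)) ->
  (forall i l, Pu.-integrable setT (fun w => ((u i l w) ^+ 2)%:E)) ->
  (forall i l, (\int[Pu]_w (u i l w)%:E = 0)%E) ->
  (forall i j l m, (\int[Pu]_w (u i l w * u j m w)%:E
                   = (if i == j then SigU i l m else 0)%:E)%E) ->
  let U w : 'M[R]_(n, p) := \matrix_(i, l) u i l w in
  (forall l : 'I_p,
     (\int[Pu]_w (Er (fun b => scoreR Z eps Pi a (U w) l b))%:E = 0)%E) /\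
  (forall l1 l2 : 'I_p,
     (\int[Pu]_w (n%:R * Er (fun b => scoreR Z eps Pi a (U w) l1 b
                                     * scoreR Z eps Pi a (U w) l2 b))%:E
     = (OmegaL Z eps Pi a SigU l1 l2 + OmegaH Z eps Pi a SigU l1 l2)%:E)%E).
Proof.
move=> ZDZ_unit u_mes u_sq u_mean u_cov U; split => [l | l1 l2].
  rewrite (eq_integral (fun _ => (0 : R)%:E)) => [|w _]; last by rewrite Er_scoreR.
  by have [_ ->] := has_mean_cst Pu 0.
have u_centred i l : has_mean Pu (u i l) 0.
  by split; [exact: integrable_of_sq | exact: u_mean].
have u_moment i j l m : has_mean Pu (fun w => u i l w * u j m w)
                                    (if i == j then SigU i l m else 0).
  by split; [exact: integrable_mul | exact: u_cov].
rewrite Omega_sum; have [_ <-] := has_meanZ (n%:R^-1) (has_meanD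
  (has_mean_bilinear (fun i => (Z *m Pi) i l1) (fun j => (Z *m Pi) j l2)
     (Kz eps (Vmat Z eps) (Pmat Z eps)) (fun i => u_centred i l1)
     (fun j => u_centred j l2) (fun i j => u_moment i j l1 l2))
  (has_mean_cst Pu (\sum_i \sum_j a i l1 * a j l2 * Ka (Pmat Z eps) i j))).
apply: eq_integral => w _; rewrite Er_scoreR2 //.
by congr (_%:E); congr (_ * (_ + _)); apply: eq_bigr => i _; apply: eq_bigr => j _; rewrite !mxE.
Qed.
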